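(* Let $n \ge 1$ and let $a, b \ge 1$ be integers with $a + b \le 2n$. The number of Dyck paths of semilength $n+1$ whose first peak has height $a$ and whose last peak has height $b$ is \[ \binom{2n-a-b}{n-a} - \binom{2n-a-b}{n}. \]
   Context: A Dyck path of semilength $N$ is a lattice path from $(0,0)$ to $(2N,0)$ with steps $U=(1,1)$ and $D=(1,-1)$ never going below the $x$-axis. A peak is an up-step immediately followed by a down-step; its height is the $y$-coordinate at the end of its up-step. Binomial coefficients $\binom{p}{q}$ are $0$ when $q<0$ or $q>p$. *)

From mathcomp Require Import all_boot all_order all_algebra.
Set Implicit Arguments. Unset Strict Implicit. Unset Printing Implicit Defensive.
Import GRing.Theory Num.Theory.
Local Open Scope ring_scope.

(* A lattice path is a sequence of steps: true = U = (1,1), false = D = (1,-1). *)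

Definition hgt (s : seq bool) : int := \sum_(x <- s) (if x then 1 else -1).

(* Dyck path: never goes below the x-axis and ends on it
   (semilength fixed by the length of the tuple, 2N). *)
Definition is_dyck (s : seq bool) : bool :=
  all (fun k => 0 <= hgt (take k s)) (iota 0 (size s).+1) && (hgt s == 0).

Definition is_peak (s : seq bool) (i : nat) : bool :=
  nth false s i && ~~ nth true s i.+1.

Definition peaks (s : seq bool) : seq nat :=
  [seq i <- iota 0 (size s) | is_peak s i].

Definition peak_height (s : seq bool) (i : nat) : int := hgt (take i.+1 s).

Definition first_peak_height_is (s : seq bool) (a : int) : bool :=
  (peaks s != [::]) && (peak_height s (head 0%N (peaks s)) == a).

Definition last_peak_height_is (s : seq bool) (b : int) : bool :=
  (peaks s != [::]) && (peak_height s (last 0%N (peaks s)) == b).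

(* binomial coefficient with integer lower index: zero when q < 0
   (and 'C(p, q) = 0 when q > p already). *)
Definition binz (p : nat) (q : int) : nat :=
  match q with Posz k => 'C(p, k) | Negz _ => 0%N end.

From mathcomp Require Import all_boot all_order all_algebra zify.
Import GRing.Theory Num.Theory.
Local Open Scope ring_scope.

(* A Dyck path whose first peak has height a and whose last peak has height b
   is exactly a word  U^a D w U D^b  in which the middle word w, read from
   height a-1, never goes below the axis and ends at height b-1.  For a path of
   semilength n+1 such a w has length m = 2n-a-b and n-a up-steps, so the
   count is the number of such "ballot" words.  That number is given by the
   reflection formula  C(m,u) - C(m,u+x+1)  (u up-steps, start height x,
   valid when m <= x+2u+1), proved by induction on m by splitting off the
   first step; with u = n-a and x = a-1 this is the claimed difference. *)

Fixpoint words (m : nat) : seq (seq bool) :=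
  if m is m'.+1 then map (cons true) (words m') ++ map (cons false) (words m')
  else [:: [::]].

Lemma cons_inj (c : bool) : injective (cons c).
Proof. by move=> x y []. Qed.

Lemma mem_words m s : (s \in words m) = (size s == m).
Proof.
elim: m s => [|m IH] [|c s] //=.
- by apply/negbTE/negP; rewrite mem_cat => /orP[] /mapP[x _].
- rewrite mem_cat; case: c.
  + rewrite (mem_map (@cons_inj true)) IH eqSS.
    by apply/orb_idr => /mapP[x _].
  + rewrite (mem_map (@cons_inj false)) IH eqSS.
    by apply/orb_idl => /mapP[x _].
Qed.

Lemma words_uniq m : uniq (words m).
Proof.
elim: m => [|m IH] //=.
rewrite cat_uniq !(map_inj_uniq (@cons_inj _)) IH /= andbT.
by apply/hasPn => x /mapP[y _ ->]; apply/mapP => -[z _].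
Qed.

Lemma card_tuples_words M (P : pred (seq bool)) :
  #|[pred t : M.-tuple bool | P t]| = count P (words M).
Proof.
rewrite cardE /enum_mem size_filter.
rewrite (eq_count (a2 := preim val P)) // -count_map -enumT.
suff /permP -> : perm_eq (map val (enum {: M.-tuple bool})) (words M) by [].
apply: uniq_perm.
- by rewrite map_inj_uniq ?enum_uniq //; apply: val_inj.
- exact: words_uniq.
move=> s; rewrite mem_words; apply/mapP/idP.
  by move=> [t _ ->]; rewrite size_tuple.
by move=> H; exists (Tuple H); rewrite ?mem_enum.
Qed.

Lemma count_words_bij (P Q : pred (seq bool)) (f : seq bool -> seq bool) (M m : nat) :
  {in [pred w | size w == m] &, injective f} ->
  (forall w, size w = m -> Q w -> size (f w) = M /\ P (f w)) ->
  (forall s, size s = M -> P s -> exists2 w, size w = m /\ Q w & s = f w) ->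
  count P (words M) = count Q (words m).
Proof.
move=> finj Hf Hb.
rewrite -!size_filter -(size_map f (filter Q _)).
apply: perm_size; apply: uniq_perm.
- by rewrite filter_uniq // words_uniq.
- rewrite map_inj_in_uniq ?filter_uniq ?words_uniq //.
  move=> x y; rewrite !mem_filter !mem_words => /andP[_ Hx] /andP[_ Hy].
  exact: finj.
move=> s; rewrite mem_filter mem_words; apply/idP/idP.
  move=> /andP[Ps /eqP Hs]; have [w [Hw Qw] ->] := Hb s Hs Ps.
  by apply: map_f; rewrite mem_filter mem_words Qw Hw eqxx.
move=> /mapP[w]; rewrite mem_filter mem_words => /andP[Qw /eqP Hw] ->.
by have [-> ->] := Hf w Hw Qw; rewrite eqxx.
Qed.

Definition step (c : bool) : int := if c then 1 else -1.

Lemma hgt_nil : hgt [::] = 0.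
Proof. by rewrite /hgt big_nil. Qed.

Lemma hgt_cons c s : hgt (c :: s) = step c + hgt s.
Proof. by rewrite /hgt big_cons. Qed.

Lemma hgt_cat s1 s2 : hgt (s1 ++ s2) = hgt s1 + hgt s2.
Proof. by rewrite /hgt big_cat. Qed.

Lemma hgt_count s : hgt s = (2 * count id s)%N%:Z - (size s)%:Z.
Proof.
elim: s => [|c s IH]; first by rewrite hgt_nil.
rewrite hgt_cons IH; case: c => /=; lia.
Qed.

Lemma hgt_nseqT k : hgt (nseq k true) = k%:Z.
Proof. by elim: k => [|k IH]; rewrite ?hgt_nil //= hgt_cons IH /=; lia. Qed.

Lemma hgt_nseqF k : hgt (nseq k false) = - k%:Z.
Proof. by elim: k => [|k IH]; rewrite ?hgt_nil //= hgt_cons IH /=; lia. Qed.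

Fixpoint stays_nonneg (x : int) (s : seq bool) : bool :=
  if s is c :: s' then (0 <= x + step c) && stays_nonneg (x + step c) s'
  else true.

Lemma stays_nonneg_cat x s1 s2 :
  stays_nonneg x (s1 ++ s2) = stays_nonneg x s1 && stays_nonneg (x + hgt s1) s2.
Proof.
elim: s1 x => [|c s1 IH] x /=; first by rewrite hgt_nil addr0.
by rewrite IH hgt_cons addrA andbA.
Qed.

Lemma all_prefixes_nonneg x s :
  all (fun k => 0 <= x + hgt (take k s)) (iota 0 (size s).+1)
  = (0 <= x) && stays_nonneg x s.
Proof.
elim: s x => [|c s IH] x; first by rewrite /= hgt_nil addr0 andbT.
change (iota 0 (size (c :: s)).+1) with (0%N :: iota (1 + 0) (size s).+1).
rewrite iotaDl -[0%N :: _]cat1s all_cat all_map.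
have shift : all (preim (addn 1) (fun k => 0 <= x + hgt (take k (c :: s))))
               (iota 0 (size s).+1)
           = all (fun k => 0 <= (x + step c) + hgt (take k s)) (iota 0 (size s).+1).
  by apply: eq_all => k /=; rewrite hgt_cons addrA.
by rewrite shift IH /= hgt_nil addr0 andbT.
Qed.

Lemma is_dyckE s : is_dyck s = stays_nonneg 0 s && (hgt s == 0).
Proof.
rewrite /is_dyck (eq_all (a2 := fun k => 0 <= 0 + hgt (take k s))).
  by rewrite all_prefixes_nonneg.
by move=> k; rewrite add0r.
Qed.

Lemma stays_nonneg_hgt x s : 0 <= x -> stays_nonneg x s -> 0 <= x + hgt s.
Proof.
elim: s x => [|c s IH] x /=; first by rewrite hgt_nil addr0.
by move=> _ /andP[h1 h2]; rewrite hgt_cons addrA; apply: IH.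
Qed.

Lemma stays_nonneg_up x k : 0 <= x -> stays_nonneg x (nseq k true).
Proof.
elim: k x => [|k IH] x Hx //=.
have H : 0 <= x + step true by rewrite /=; lia.
by rewrite H IH.
Qed.

Lemma stays_nonneg_down x k : 0 <= x -> stays_nonneg x (nseq k false) = (k%:Z <= x).
Proof.
elim: k x => [|k IH] x Hx /=; first by apply/esym; lia.
have [H|H] := boolP (0 <= x + step false).
  by rewrite /= in H *; rewrite IH //; apply/idP/idP => ?; lia.
by rewrite /= in H; apply/esym/negbTE; lia.
Qed.

Definition ballot (m x u : nat) : nat :=
  count (fun w => stays_nonneg x%:Z w && (count id w == u)) (words m).

(* First-step decomposition: an initial up-step leaves a ballot word from
   height x+1 with one up-step fewer, an initial down-step (possible only
   when x > 0) a ballot word from height x-1. *)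
Lemma ballotS m x u :
  ballot m.+1 x u = ((if u is u'.+1 then ballot m x.+1 u' else 0)
                     + (if x is x'.+1 then ballot m x' u else 0))%N.
Proof.
rewrite /ballot /= count_cat !count_map; congr addn.
- case: u => [|u]; last first.
    apply: eq_count => w /=; rewrite eqSS.
    by rewrite (_ : x%:Z + step true = x.+1%:Z) //= addrC.
  by rewrite (@eq_count _ _ pred0) ?count_pred0 // => w /=; rewrite andbF.
- case: x => [|x]; first by rewrite (@eq_count _ _ pred0) ?count_pred0.
  apply: eq_count => w /=.
  by rewrite (_ : x.+1%:Z + step false = x%:Z) //=; lia.
Qed.

Lemma ballot_formula m x u : (m <= x + 2 * u + 1)%N ->
  (ballot m x u)%:Z = ('C(m, u))%:Z - ('C(m, u + x + 1))%:Z.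
Proof.
elim: m x u => [|m IH] x u Hm.
  by rewrite /ballot /=; case: u Hm => [|u] _ /=; rewrite ?bin0 ?addn1 ?bin0n.
rewrite ballotS; case: u Hm => [|u] Hm; case: x Hm => [|x] Hm.
- by have -> : m = 0%N by lia.
- rewrite add0n IH; last by lia.
  rewrite !add0n !addn1 binS (bin_small (n := m) (m := x.+2)) ?bin0; lia.
- rewrite addn0 IH; last by lia.
  rewrite !addn0 !addn1 !binS; lia.
- rewrite PoszD !IH; try lia.
  rewrite !addn1 !addSn !addnS !binS; lia.
Qed.

Lemma nth_nseq_cat d k r i : (i < k)%N -> nth d (nseq k true ++ r) i = true.
Proof. by move=> H; rewrite nth_cat size_nseq H nth_nseq H. Qed.

Lemma take_size_cons (l r : seq bool) c : take (size l).+1 (l ++ c :: r) = l ++ [:: c].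
Proof. by elim: l => [|x l IH] /=; rewrite ?take0 ?IH. Qed.

Lemma peaks_front k r : (0 < k)%N ->
  exists tl, peaks (nseq k true ++ false :: r) = k.-1 :: tl.
Proof.
move=> Hk; set s := nseq k true ++ false :: r.
rewrite /peaks (_ : size s = k.-1 + (size r).+2)%N; last first.
  by rewrite /s size_cat size_nseq /=; lia.
rewrite iotaD filter_cat.
have -> : [seq i <- iota 0 k.-1 | is_peak s i] = [::].
  rewrite -(filter_pred0 (iota 0 k.-1)); apply: eq_in_filter => i.
  rewrite mem_iota => /andP[_ Hi]; rewrite /is_peak /s nth_nseq_cat /=; last by lia.
  by rewrite nth_nseq_cat //; lia.
rewrite add0n /= (_ : is_peak s k.-1 = true); first by eexists.
rewrite /is_peak /s nth_nseq_cat; last by lia.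
by rewrite (prednK Hk) nth_cat size_nseq ltnn subnn.
Qed.

Lemma peaks_back l b : (0 < b)%N ->
  exists hd, peaks (l ++ true :: nseq b false) = rcons hd (size l).
Proof.
move=> Hb; set s := l ++ true :: nseq b false.
rewrite /peaks (_ : size s = size l + b.+1)%N; last first.
  by rewrite /s size_cat /= size_nseq.
rewrite iotaD filter_cat add0n /=.
have -> : [seq i <- iota (size l).+1 b | is_peak s i] = [::].
  rewrite -(filter_pred0 (iota (size l).+1 b)); apply: eq_in_filter => i.
  rewrite mem_iota => /andP[H1 H2]; rewrite /is_peak /s nth_cat ltnNge.
  rewrite (ltnW H1) /= (_ : (i - size l = (i - size l).-1.+1)%N); last by lia.
  by rewrite /= nth_nseq; case: ifP.
rewrite (_ : is_peak s (size l) = true).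
  by exists [seq i <- iota 0 (size l) | is_peak s i]; rewrite cats1.
rewrite /is_peak /s nth_cat ltnn subnn /= nth_cat ltnNge leqnSn /= subSn //.
by rewrite subnn /= nth_nseq Hb.
Qed.

Lemma front_split (s : seq bool) :
  exists k r, s = nseq k true ++ r /\ (r = [::] \/ exists r', r = false :: r').
Proof.
elim: s => [|c s [k [r [-> H]]]]; first by exists 0%N, [::]; split; [|left].
case: c; first by exists k.+1, r.
by exists 0%N, (false :: (nseq k true ++ r)); split; [|right; eexists].
Qed.

Lemma back_split (s : seq bool) :
  exists l j, s = l ++ nseq j false /\ (l = [::] \/ exists l', l = rcons l' true).
Proof.
elim/last_ind: s => [|s c [l [j [-> H]]]]; first by exists [::], 0%N; split; [|left].
case: c; last first.
  exists l, j.+1; split => //; rewrite -cats1 -catA cats1.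
  by rewrite (_ : rcons (nseq j false) false = nseq j.+1 false) //; elim: j {H} => //= j ->.
by exists (rcons (l ++ nseq j false) true), 0%N; split; [rewrite cats0|right; eexists].
Qed.

Lemma first_peak_shape s a :
  is_dyck s -> first_peak_height_is s a%:Z ->
  exists r, s = nseq a true ++ false :: r.
Proof.
rewrite is_dyckE => /andP[Hnn /eqP H0] Hf.
have [k [r [Hs [Er|[r' Er]]]]] := front_split s; subst r.
  move: H0 Hf; rewrite Hs cats0 hgt_nseqT => /eqP; rewrite eqz_nat => /eqP -> /=.
  by rewrite /first_peak_height_is /peaks.
have Hk : (0 < k)%N by case: k Hs => // Hs; move: Hnn; rewrite Hs.
move: Hf; rewrite /first_peak_height_is Hs.
have [tl ->] := peaks_front k r' Hk.
rewrite /= /peak_height (prednK Hk) take_size_cat ?size_nseq // hgt_nseqT.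
by move/eqP => [->]; exists r'.
Qed.

Lemma last_peak_shape s b :
  is_dyck s -> last_peak_height_is s b%:Z ->
  exists l, s = l ++ true :: nseq b false.
Proof.
rewrite is_dyckE => /andP[Hnn /eqP H0] Hl.
have [l [j [Hs [El|[l' El]]]]] := back_split s; subst l.
  move: Hnn Hl; rewrite Hs /= stays_nonneg_down // => Hj.
  have -> : j = 0%N by lia.
  by rewrite /last_peak_height_is /peaks.
have {}Hs : s = l' ++ true :: nseq j false by rewrite Hs -cats1 -catA.
have Hl'0 : 0 <= hgt l'.
  move: Hnn; rewrite Hs stays_nonneg_cat => /andP[Hl' _].
  by have := @stays_nonneg_hgt 0 l' isT Hl'; rewrite add0r.
have Hj : (0 < j)%N.
  case: j Hs => // Hs; move: H0; rewrite Hs hgt_cat hgt_cons hgt_nil /=; lia.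
move: Hl; rewrite /last_peak_height_is Hs.
have [hd ->] := peaks_back l' j Hj.
rewrite /= last_rcons /peak_height take_size_cons hgt_cat hgt_cons hgt_nil.
move=> /andP[_ /eqP Hb]; exists l'; congr (_ ++ _ :: nseq _ _).
by move: H0 Hb; rewrite Hs hgt_cat hgt_cons hgt_nseqF /=; lia.
Qed.

Lemma cat_no_overlap {T : Type} (p r l q : seq T) :
  p ++ r = l ++ q -> (size p + size q <= size (p ++ r))%N ->
  exists w, r = w ++ q.
Proof.
move=> E Hsz; have Hpl : (size p <= size l)%N.
  by move: Hsz; rewrite E !size_cat; lia.
exists (drop (size p) l); have := congr1 (drop (size p)) E.
by rewrite -(cat_take_drop (size p) l) -catA !drop_size_cat // size_takel.
Qed.

Definition dyck_peaks (a b : nat) (s : seq bool) : bool :=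
  is_dyck s && first_peak_height_is s a%:Z && last_peak_height_is s b%:Z.

Definition embed (a b : nat) (w : seq bool) : seq bool :=
  nseq a true ++ false :: (w ++ true :: nseq b false).

Definition middle (n a : nat) (w : seq bool) : bool :=
  stays_nonneg a.-1%:Z w && (count id w + a == n)%N.

Lemma embed_last a b w :
  embed a b w = (nseq a true ++ false :: w) ++ true :: nseq b false.
Proof. by rewrite /embed -catA. Qed.

Lemma size_embed a b w : size (embed a b w) = (a + size w + b + 2)%N.
Proof. by rewrite /embed size_cat /= size_cat /= !size_nseq; lia. Qed.

Lemma hgt_embed a b w : hgt (embed a b w) = a%:Z + hgt w - b%:Z.
Proof.
rewrite /embed hgt_cat hgt_cons hgt_cat hgt_cons hgt_nseqT hgt_nseqF /=; lia.
Qed.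

(* w is recovered from embed a b w by dropping a+1 letters and keeping |w|. *)
Lemma embed_inj a b m : {in [pred w | size w == m] &, injective (embed a b)}.
Proof.
have drop_embed v : drop a.+1 (embed a b v) = v ++ true :: nseq b false.
  by rewrite /embed drop_cat size_nseq ltnNge leqnSn /= subSnn drop1.
move=> x y; rewrite !inE => /eqP Hx /eqP Hy E.
have := congr1 (take m) (congr1 (drop a.+1) E).
by rewrite !drop_embed !take_size_cat.
Qed.

Lemma stays_nonneg_embed a b w : (1 <= a)%N ->
  stays_nonneg 0 (embed a b w) =
  stays_nonneg a.-1%:Z w && stays_nonneg (a.-1%:Z + hgt w + 1) (nseq b false).
Proof.
move=> Ha; rewrite /embed -cat1s !stays_nonneg_cat stays_nonneg_up //.
rewrite hgt_nseqT hgt_cons hgt_nil /= (_ : 0 + a%:Z + (-1 + 0) = a.-1%:Z); last by lia.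
rewrite (_ : 0 <= a.-1%:Z = true) //=; case Hw: (stays_nonneg _ w) => //=.
have := @stays_nonneg_hgt a.-1%:Z w _ Hw => /(_ isT) Hh.
by rewrite (_ : 0 <= a.-1%:Z + hgt w + 1 = true) //; lia.
Qed.

Lemma embed_dyck_peaks n a b w : (1 <= a)%N -> (1 <= b)%N ->
  size w = (2 * n - a - b)%N -> (a + b <= 2 * n)%N -> middle n a w ->
  dyck_peaks a b (embed a b w).
Proof.
move=> Ha Hb Hw Hab /andP[Hnn /eqP Hc].
have Hhw : hgt w = b%:Z - a%:Z by rewrite hgt_count Hw; lia.
apply/andP; split; first (apply/andP; split).
- rewrite is_dyckE stays_nonneg_embed // Hnn hgt_embed Hhw stays_nonneg_down; last by lia.
  by apply/andP; split; lia.
- rewrite /first_peak_height_is /embed.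
  have [tl ->] := peaks_front a (w ++ true :: nseq b false) Ha.
  by rewrite /= /peak_height (prednK Ha) take_size_cat ?size_nseq // hgt_nseqT.
- rewrite /last_peak_height_is embed_last.
  have [hd ->] := peaks_back (nseq a true ++ false :: w) b Hb.
  rewrite -size_eq0 size_rcons /= last_rcons /peak_height take_size_cons.
  rewrite !hgt_cat !hgt_cons hgt_nseqT Hhw hgt_nil /=; apply/eqP; lia.
Qed.

Lemma dyck_peaks_embed n a b s : (1 <= a)%N -> (a + b <= 2 * n)%N ->
  size s = (2 * n.+1)%N -> dyck_peaks a b s ->
  exists2 w, size w = (2 * n - a - b)%N /\ middle n a w & s = embed a b w.
Proof.
move=> Ha Hab Hs /andP[/andP[Hd Hf] Hl].
have [r Er] := first_peak_shape _ _ Hd Hf.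
have [l El] := last_peak_shape _ _ Hd Hl.
have Er1 : s = (nseq a true ++ [:: false]) ++ r by rewrite -catA.
have [|w Ew] := cat_no_overlap _ _ _ _ (etrans (esym Er1) El).
  by rewrite -Er1 Hs /= size_cat !size_nseq /=; lia.
have Es : s = embed a b w by rewrite Er1 Ew /embed -catA.
have Hw : size w = (2 * n - a - b)%N by move: Hs; rewrite Es size_embed; lia.
exists w => //; split => //; move: Hd; rewrite Es is_dyckE stays_nonneg_embed //.
move=> /andP[/andP[Hnn _]]; rewrite /middle Hnn hgt_embed hgt_count Hw /=; lia.
Qed.

Lemma count_dyck_peaks n a b : (1 <= a)%N -> (1 <= b)%N -> (a + b <= 2 * n)%N ->
  count (dyck_peaks a b) (words (2 * n.+1)) = count (middle n a) (words (2 * n - a - b)).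
Proof.
move=> Ha Hb Hab.
apply: (@count_words_bij _ (middle n a) _ _ _ (@embed_inj a b _)).
- move=> w Hw Mw; split; last exact: (embed_dyck_peaks _ _ _ _ Ha Hb Hw Hab Mw).
  by rewrite size_embed Hw; lia.
- by move=> s Hs Ps; apply: (dyck_peaks_embed _ _ _ _ Ha Hab Hs Ps).
Qed.

Lemma count_middle n a m : (a <= n)%N ->
  count (middle n a) (words m) = ballot m a.-1 (n - a).
Proof.
move=> Han; apply: eq_count => w; rewrite /middle; congr andb.
by apply/eqP/eqP; lia.
Qed.

(* When a > n there are not enough up-steps: no middle word exists. *)
Lemma count_middle_large n a m : (n < a)%N -> count (middle n a) (words m) = 0%N.
Proof.
move=> Han; rewrite (@eq_count _ _ pred0) ?count_pred0 // => w.
by rewrite /middle andbC (_ : (count id w + a == n)%N = false) //; apply/negbTE; lia.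
Qed.

Theorem mainTheorem6 (n a b : nat) :
  (1 <= n)%N -> (1 <= a)%N -> (1 <= b)%N -> (a + b <= 2 * n)%N ->
  (#|[pred t : (2 * n.+1).-tuple bool |
        is_dyck t && first_peak_height_is t a%:Z && last_peak_height_is t b%:Z]|%:Z
   = (binz (2 * n - a - b) (n%:Z - a%:Z))%:Z - (binz (2 * n - a - b) n%:Z)%:Z)%R.
Proof.
move=> _ Ha Hb Hab.
rewrite (card_tuples_words _ (dyck_peaks a b)) count_dyck_peaks //.
case: (leqP a n) => Han.
- rewrite count_middle // ballot_formula; last by lia.
  by rewrite (subzn Han) /= (_ : (n - a + a.-1 + 1 = n)%N) //; lia.
- rewrite count_middle_large //= bin_small; last by lia.
  by case E: (n%:Z - a%:Z) => [k|k] //; lia.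
Qed.
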